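(* Let $A$ be an integral residuated $\vee$-semilattice. Then: (1) $A$ is a $\to$-MTL-algebra if and only if the set of $\to$-prime filters of $A$ equals the set of $\vee$-prime filters of $A$; (2) $A$ is a $\leadsto$-MTL-algebra if and only if the set of $\leadsto$-prime filters of $A$ equals the set of $\vee$-prime filters of $A$; (3) $A$ is a pseudo MTL-algebra if and only if the set of prime filters of $A$ equals the set of $\vee$-prime filters of $A$.
   Context: A residuated poset is a partially ordered semigroup $(A;\cdot,\le)$ with binary operations $\to,\leadsto$ such that $x\cdot y\le z$ iff $x\le y\to z$ iff $y\le x\leadsto z$ for all $x,y,z$. It is a residuated $\vee$-semilattice if $(A,\le)$ is a join-semilattice (every pair has a supremum $x\vee y$). It is integral if it has a greatest element $1$ which is a multiplicative identity ($1\cdot x=x\cdot 1=x$). A filter of $A$ is a nonempty subset $F$ that is upward closed and closed under $\cdot$. A filter $F$ is $\to$-prime if for all $x,y\in A$, $x\to y\in F$ or $y\to x\in F$; $\leadsto$-prime if for all $x,y$, $x\leadsto y\in F$ or $y\leadsto x\in F$; prime if it is both $\to$-prime and $\leadsto$-prime; $\vee$-prime if $x\vee y\in F$ implies $x\in F$ or $y\in F$. $A$ is a $\to$-MTL-algebra if $(x\to y)\vee(y\to x)=1$ for all $x,y$; a $\leadsto$-MTL-algebra if $(x\leadsto y)\vee(y\leadsto x)=1$ for all $x,y$; a pseudo MTL-algebra if it is both. *)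

Record IRJSemilattice := {
  car :> Type;
  le : car -> car -> Prop;
  mul : car -> car -> car;
  imp : car -> car -> car;
  limp : car -> car -> car;
  join : car -> car -> car;
  one : car;
  le_refl : forall x, le x x;
  le_antisym : forall x y, le x y -> le y x -> x = y;
  le_trans : forall x y z, le x y -> le y z -> le x z;
  mul_assoc : forall x y z, mul x (mul y z) = mul (mul x y) z;
  mul_mono : forall x y x' y', le x x' -> le y y' -> le (mul x y) (mul x' y');
  resid_imp : forall x y z, le (mul x y) z <-> le x (imp y z);
  resid_limp : forall x y z, le (mul x y) z <-> le y (limp x z);
  join_ub_l : forall x y, le x (join x y);
  join_ub_r : forall x y, le y (join x y);
  join_least : forall x y z, le x z -> le y z -> le (join x y) z;
  one_top : forall x, le x one;
  mul_one_l : forall x, mul one x = x;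
  mul_one_r : forall x, mul x one = x
}.

Arguments le {_} _ _.
Arguments mul {_} _ _.
Arguments imp {_} _ _.
Arguments limp {_} _ _.
Arguments join {_} _ _.
Arguments one {_}.

Section Filters.
Variable A : IRJSemilattice.

Definition is_filter (F : A -> Prop) : Prop :=
  (exists x, F x) /\
  (forall x y, F x -> le x y -> F y) /\
  (forall x y, F x -> F y -> F (mul x y)).

Definition imp_prime_filter (F : A -> Prop) : Prop :=
  is_filter F /\ forall x y : A, F (imp x y) \/ F (imp y x).

Definition limp_prime_filter (F : A -> Prop) : Prop :=
  is_filter F /\ forall x y : A, F (limp x y) \/ F (limp y x).

Definition prime_filter (F : A -> Prop) : Prop :=
  imp_prime_filter F /\ limp_prime_filter F.

Definition join_prime_filter (F : A -> Prop) : Prop :=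
  is_filter F /\ forall x y : A, F (join x y) -> F x \/ F y.

Definition imp_MTL : Prop := forall x y : A, join (imp x y) (imp y x) = one.
Definition limp_MTL : Prop := forall x y : A, join (limp x y) (limp y x) = one.
Definition pseudo_MTL : Prop := imp_MTL /\ limp_MTL.

End Filters.

(** The ∨-prime filters separate the elements of [A] from [1]: by Zorn's lemma
    there is a maximal multiplicatively closed up-set [M] avoiding a given
    [a <> 1], and it is a ∨-prime filter because, by distributivity of
    multiplication over joins, the filters generated by [M] and [x] and by
    [M] and [y] meet in the filter generated by [M] and [x ∨ y].
    Now a →-prime filter is ∨-prime (from [x ∨ y] and [x → y] one gets [y]),
    and conversely if [(x → y) ∨ (y → x) = 1] then every ∨-prime filter is
    →-prime. If every ∨-prime filter is →-prime, then [(x → y) ∨ (y → x)]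
    lies in every ∨-prime filter, hence equals [1] by separation.
    The same argument works verbatim for [~>]. *)

From Stdlib Require Import Classical.
From mathcomp Require classical_sets.

Section IntegralResiduated.

Variable A : IRJSemilattice.
Implicit Types (F M S : A -> Prop) (a h k p u v w x y z : A).

Lemma mul_le_l x y : le (mul x y) x.
Proof.
  rewrite <- (mul_one_r A x) at 2. apply mul_mono; [apply le_refl | apply one_top].
Qed.

Lemma mul_le_r x y : le (mul x y) y.
Proof.
  rewrite <- (mul_one_l A y) at 2. apply mul_mono; [apply one_top | apply le_refl].
Qed.

Lemma join_comm_le x y : le (join x y) (join y x).
Proof. apply join_least; [apply join_ub_r | apply join_ub_l]. Qed.

Lemma mul_joinl_le u v w a :
  le (mul u w) a -> le (mul v w) a -> le (mul (join u v) w) a.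
Proof.
  intros Hu Hv. apply resid_imp, join_least; apply resid_imp; assumption.
Qed.

Lemma mul_joinr_le p u v a :
  le (mul p u) a -> le (mul p v) a -> le (mul p (join u v)) a.
Proof.
  intros Hu Hv. apply resid_limp, join_least; apply resid_limp; assumption.
Qed.

Lemma mul_mul_joinr_le p u v w a :
  le (mul (mul p u) w) a -> le (mul (mul p v) w) a ->
  le (mul (mul p (join u v)) w) a.
Proof.
  intros Hu Hv. apply resid_imp, mul_joinr_le; rewrite <- resid_imp; assumption.
Qed.

Lemma imp_join_le x y : le (imp x y) (imp (join x y) y).
Proof.
  apply resid_imp, mul_joinr_le; [apply resid_imp, le_refl | apply mul_le_r].
Qed.

Lemma limp_join_le x y : le (limp x y) (limp (join x y) y).
Proof.
  apply resid_limp, mul_joinl_le; [apply resid_limp, le_refl | apply mul_le_l].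
Qed.

Fixpoint mpow u n : A :=
  match n with 0 => one | S n => mul u (mpow u n) end.

Lemma mpowD u n m : mpow u (n + m) = mul (mpow u n) (mpow u m).
Proof.
  induction n as [|n IHn]; simpl.
  - now rewrite mul_one_l.
  - rewrite IHn. apply mul_assoc.
Qed.

Lemma mpow_le u v n : le u v -> le (mpow u n) (mpow v n).
Proof.
  intro Huv. induction n as [|n IHn]; simpl; [apply le_refl | now apply mul_mono].
Qed.

(** Expanding [(u ∨ v)^(n+m)] by distributivity, every monomial contains
    [u^n] or [v^m] as a scattered subword. *)
Lemma mul_mpow_join_le u v a n m p :
  le (mul p (mpow u n)) a -> le (mul p (mpow v m)) a ->
  le (mul p (mpow (join u v) (n + m))) a.
Proof.
  revert m p. induction n as [|n IHn].
  { intros m p Hu Hv. simpl in Hu. rewrite mul_one_r in Hu. eapply le_trans; [apply mul_le_l | exact Hu]. }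
  intro m. induction m as [|m IHm]; intros p Hu Hv.
  { simpl in Hv. rewrite mul_one_r in Hv. eapply le_trans; [apply mul_le_l | exact Hv]. }
  simpl. rewrite mul_assoc. apply mul_mul_joinr_le.
  - apply IHn.
    + rewrite <- mul_assoc. exact Hu.
    + eapply le_trans; [apply mul_mono; [apply mul_le_l | apply le_refl] | exact Hv].
  - rewrite PeanoNat.Nat.add_succ_r. apply (IHm (mul p v)).
    + eapply le_trans; [apply mul_mono; [apply mul_le_l | apply le_refl] | exact Hu].
    + rewrite <- mul_assoc. exact Hv.
Qed.

Definition alt_pow h x n : A := mul h (mpow (mul x h) n).

Lemma alt_pow_le h k x n : le k h -> le (alt_pow k x n) (alt_pow h x n).
Proof.
  intro Hkh. apply mul_mono; [exact Hkh|]. apply mpow_le, mul_mono; [apply le_refl | exact Hkh].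
Qed.

Lemma alt_pow_sq_le k x n : le (alt_pow (mul k k) x n) (mul (alt_pow k x n) k).
Proof.
  unfold alt_pow. induction n as [|n IHn]; simpl.
  - rewrite !mul_one_r. apply le_refl.
  - apply le_trans with (mul k (mul x (mul (mul k k) (mpow (mul x (mul k k)) n)))).
    + rewrite <- (mul_assoc A x (mul k k)).
      apply mul_mono; [apply mul_le_l | apply le_refl].
    + apply le_trans with (mul k (mul x (mul (mul k (mpow (mul x k) n)) k))).
      * apply mul_mono; [apply le_refl|]. apply mul_mono; [apply le_refl | exact IHn].
      * rewrite !mul_assoc. apply le_refl.
Qed.

Lemma alt_pow_mul_le k x n m :
  le (alt_pow (mul k k) x (n + m)) (mul (alt_pow k x n) (alt_pow k x m)).
Proof.
  unfold alt_pow at 1. rewrite mpowD, mul_assoc.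
  apply le_trans with (mul (mul (alt_pow k x n) k) (mpow (mul x (mul k k)) m)).
  - apply mul_mono; [apply alt_pow_sq_le | apply le_refl].
  - rewrite <- mul_assoc. apply mul_mono; [apply le_refl|].
    apply mul_mono; [apply le_refl|]. apply mpow_le, mul_mono; [apply le_refl | apply mul_le_l].
Qed.

Definition up_closed S : Prop := forall x y, S x -> le x y -> S y.
Definition mul_closed S : Prop := forall x y, S x -> S y -> S (mul x y).

Lemma filter_one F : is_filter A F -> F one.
Proof. intros [[x Fx] [Fup _]]. exact (Fup x one Fx (one_top A x)). Qed.

Lemma filter_mpow F u n : is_filter A F -> F u -> F (mpow u n).
Proof.
  intros HF Fu. induction n as [|n IHn]; simpl; [now apply filter_one|].
  destruct HF as [_ [_ Fmul]]. now apply Fmul.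
Qed.

Lemma filter_imp_mp F x y : is_filter A F -> F x -> F (imp x y) -> F y.
Proof.
  intros [_ [Fup Fmul]] Fx Fxy. apply (Fup (mul (imp x y) x)); [now apply Fmul|].
  apply resid_imp, le_refl.
Qed.

Lemma filter_limp_mp F x y : is_filter A F -> F x -> F (limp x y) -> F y.
Proof.
  intros [_ [Fup Fmul]] Fx Fxy. apply (Fup (mul x (limp x y))); [now apply Fmul|].
  apply resid_limp, le_refl.
Qed.

(** When [M] is a filter, [gen M x] is the filter generated by [M] and [x]:
    by integrality every product of elements of [M] and [x] lies above some
    [h (x h)^n] with [h] in [M]. *)
Definition gen M x z : Prop := exists h n, M h /\ le (alt_pow h x n) z.

Lemma gen_up_closed M x : up_closed (gen M x).
Proof.
  intros z z' [h [n [Mh Hz]]] Hzz'. exists h, n. split; [exact Mh | eapply le_trans; eauto].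
Qed.

Lemma gen_mul_closed M x : mul_closed M -> mul_closed (gen M x).
Proof.
  intros Mmul z1 z2 [h1 [n [Mh1 H1]]] [h2 [m [Mh2 H2]]].
  set (k := mul h1 h2).
  assert (Mk : M k) by now apply Mmul.
  exists (mul k k), (n + m). split; [now apply Mmul|].
  eapply le_trans; [apply alt_pow_mul_le|].
  apply mul_mono.
  - eapply le_trans; [apply alt_pow_le, mul_le_l | exact H1].
  - eapply le_trans; [apply alt_pow_le, mul_le_r | exact H2].
Qed.

Lemma gen_incl M x z : M z -> gen M x z.
Proof.
  intro Mz. exists z, 0. split; [exact Mz|]. unfold alt_pow. simpl.
  rewrite mul_one_r. apply le_refl.
Qed.

Lemma gen_gen M x : M one -> gen M x x.
Proof.
  intro M1. exists one, 1. split; [exact M1|]. unfold alt_pow. simpl.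
  rewrite !mul_one_r, mul_one_l. apply le_refl.
Qed.

Definition avoiding_upset a S : Prop := ~ S a /\ up_closed S /\ mul_closed S.

Lemma exists_maximal_avoiding_upset a :
  exists M, avoiding_upset a M /\
    forall S, avoiding_upset a S -> (forall z, M z -> S z) -> forall z, S z -> M z.
Proof.
  destruct (@classical_sets.Zorn_bigcup _ (avoiding_upset a)) as [M [HM Mmax]].
  - intros C HC Htot. repeat split.
    + intros [X CX Xa]. exact (proj1 (HC X CX) Xa).
    + intros x y [X CX Xx] Hxy. exists X; [exact CX|].
      exact (proj1 (proj2 (HC X CX)) x y Xx Hxy).
    + intros x y [X CX Xx] [Y CY Yy].
      destruct (Htot X Y CX CY) as [HXY | HYX].
      * exists Y; [exact CY|]. apply (proj2 (proj2 (HC Y CY))); auto.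
      * exists X; [exact CX|]. apply (proj2 (proj2 (HC X CX))); auto.
  - exists M. split; [exact HM|].
    intros S HS MS z Sz. apply NNPP. intro Nz.
    apply (Mmax S); [split; [exact MS|] | exact HS]. intro SM. exact (Nz (SM z Sz)).
Qed.

Section MaximalAvoidingUpset.

Variables (a : A) (M : A -> Prop).
Hypothesis a_neq_one : a <> one.
Hypothesis M_avoiding : avoiding_upset a M.
Hypothesis M_maximal :
  forall S, avoiding_upset a S -> (forall z, M z -> S z) -> forall z, S z -> M z.

Lemma maximal_one : M one.
Proof.
  destruct M_avoiding as [Ma [Mup Mmul]].
  apply (M_maximal (fun z => M z \/ z = one)); [| now left | now right].
  repeat split.
  - intros [Ha | Ha]; [exact (Ma Ha) | exact (a_neq_one Ha)].
  - intros x y [Mx | ->] Hxy; [left; eauto | right].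
    apply le_antisym; [apply one_top | exact Hxy].
  - intros x y [Mx | ->] [My | ->].
    + left; auto.
    + rewrite mul_one_r. now left.
    + rewrite mul_one_l. now left.
    + rewrite mul_one_l. now right.
Qed.

Lemma maximal_filter : is_filter A M.
Proof.
  destruct M_avoiding as [_ [Mup Mmul]].
  split; [exists one; exact maximal_one | split; assumption].
Qed.

Lemma maximal_gen_contains_a x : ~ M x -> gen M x a.
Proof.
  intro Nx. apply NNPP. intro Ng. apply Nx.
  apply (M_maximal (gen M x)).
  - split; [exact Ng | split; [apply gen_up_closed | apply gen_mul_closed, M_avoiding]].
  - apply gen_incl.
  - exact (gen_gen M x maximal_one).
Qed.

Lemma maximal_join_prime : join_prime_filter A M.
Proof.
  split; [exact maximal_filter|].
  destruct M_avoiding as [Ma [Mup Mmul]].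
  intros x y Mxy. apply NNPP. intro Nxy.
  destruct (maximal_gen_contains_a x ltac:(tauto)) as [h1 [n [Mh1 H1]]].
  destruct (maximal_gen_contains_a y ltac:(tauto)) as [h2 [m [Mh2 H2]]].
  set (k := mul h1 h2).
  assert (Mk : M k) by now apply Mmul.
  apply Ma, (Mup (mul k (mpow (mul (join x y) k) (n + m)))).
  - apply Mmul; [exact Mk|]. apply filter_mpow; [exact maximal_filter | now apply Mmul].
  - eapply le_trans.
    { apply mul_mono; [apply le_refl|]. apply mpow_le.
      apply mul_joinl_le; apply join_ub_l || apply join_ub_r. }
    apply mul_mpow_join_le.
    + eapply le_trans; [apply alt_pow_le, mul_le_l | exact H1].
    + eapply le_trans; [apply alt_pow_le, mul_le_r | exact H2].
Qed.

End MaximalAvoidingUpset.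

Lemma join_prime_filter_separation a :
  a <> one -> exists F, join_prime_filter A F /\ ~ F a.
Proof.
  intro Ha. destruct (exists_maximal_avoiding_upset a) as [M [HM Mmax]].
  exists M. split; [exact (maximal_join_prime a M Ha HM Mmax) | apply HM].
Qed.

Lemma join_prime_filters_meet_one b :
  (forall F, join_prime_filter A F -> F b) -> b = one.
Proof.
  intro Hb. apply NNPP. intro Nb.
  destruct (join_prime_filter_separation b Nb) as [F [HF NF]]. exact (NF (Hb F HF)).
Qed.

Section Prelinearity.

Variable r : A -> A -> A.

Definition prelinear : Prop := forall x y, join (r x y) (r y x) = one.

Definition r_prime_filter F : Prop := is_filter A F /\ forall x y, F (r x y) \/ F (r y x).

Lemma prelinear_of_join_prime :
  (forall F, join_prime_filter A F -> r_prime_filter F) -> prelinear.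
Proof.
  intros H x y. apply join_prime_filters_meet_one. intros F HF.
  destruct (H F HF) as [[_ [Fup _]] Fr].
  destruct (Fr x y) as [K | K]; eapply Fup; eauto; [apply join_ub_l | apply join_ub_r].
Qed.

Lemma join_prime_r_prime F : prelinear -> join_prime_filter A F -> r_prime_filter F.
Proof.
  intros Hr [HF Fj]. split; [exact HF|]. intros x y.
  apply Fj. rewrite Hr. now apply filter_one.
Qed.

Hypothesis r_mp : forall F x y, is_filter A F -> F x -> F (r x y) -> F y.
Hypothesis r_join_le : forall x y, le (r x y) (r (join x y) y).

Lemma r_prime_join_prime F : r_prime_filter F -> join_prime_filter A F.
Proof.
  intros [HF Fr]. split; [exact HF|].
  pose proof HF as [_ [Fup _]].
  assert (Hmp : forall x y, F (join x y) -> F (r x y) -> F y).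
  { intros x y Fj Fxy. apply (r_mp F (join x y)); [exact HF | exact Fj|].
    exact (Fup _ _ Fxy (r_join_le x y)). }
  intros x y Fj. destruct (Fr x y) as [K | K].
  - right. exact (Hmp x y Fj K).
  - left. exact (Hmp y x (Fup _ _ Fj (join_comm_le x y)) K).
Qed.

Lemma prelinear_iff_prime_join_prime :
  prelinear <-> forall F, r_prime_filter F <-> join_prime_filter A F.
Proof.
  split.
  - intros Hr F. split; [apply r_prime_join_prime | now apply join_prime_r_prime].
  - intro H. apply prelinear_of_join_prime. intros F. apply H.
Qed.

End Prelinearity.

End IntegralResiduated.

Theorem theorem5p7 (A : IRJSemilattice) :
  (imp_MTL A <->
     (forall F : A -> Prop, imp_prime_filter A F <-> join_prime_filter A F)) /\
  (limp_MTL A <->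
     (forall F : A -> Prop, limp_prime_filter A F <-> join_prime_filter A F)) /\
  (pseudo_MTL A <->
     (forall F : A -> Prop, prime_filter A F <-> join_prime_filter A F)).
Proof.
  pose proof (prelinear_iff_prime_join_prime A imp (filter_imp_mp A) (imp_join_le A))
    as Himp.
  pose proof (prelinear_iff_prime_join_prime A limp (filter_limp_mp A) (limp_join_le A))
    as Hlimp.
  split; [exact Himp | split; [exact Hlimp|]].
  split.
  - intros [Hi Hl] F. split.
    + intros [HF _]. exact (proj1 (proj1 Himp Hi F) HF).
    + intro HF. split; [exact (proj2 (proj1 Himp Hi F) HF) | exact (proj2 (proj1 Hlimp Hl F) HF)].
  - intro H. split; apply prelinear_of_join_prime; intros F HF; apply H, HF.
Qed.
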